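(* $\operatorname{BSR}(4,4)\ge 10$. In particular, the biquadratic form \[P(\mathbf{x},\mathbf{y})=x_1^2y_1^2+x_1^2y_2^2+x_2^2y_1^2+x_2^2y_3^2+x_3^2y_1^2+x_3^2y_4^2+x_4^2y_2^2+x_4^2y_3^2+x_4^2y_4^2+(x_1y_3+x_2y_4)^2\] on $\mathbb{R}^4\times\mathbb{R}^4$ has SOS rank $10$ (i.e., it cannot be written as a sum of fewer than 10 squares of bilinear forms).
   Context: An $m\times n$ biquadratic form is a polynomial $P(\mathbf{x},\mathbf{y})=\sum_{i,k=1}^m\sum_{j,l=1}^n a_{ijkl}x_ix_ky_jy_l$ with real coefficients, $\mathbf{x}\in\mathbb{R}^m$, $\mathbf{y}\in\mathbb{R}^n$. It is SOS if $P=\sum_{p=1}^r f_p^2$ for some real bilinear forms $f_p(\mathbf{x},\mathbf{y})=\sum_{i,j}c^{(p)}_{ij}x_iy_j$; the least such $r$ is the SOS rank $\operatorname{sos}(P)$. $\operatorname{BSR}(m,n)$ is the maximum of $\operatorname{sos}(P)$ over all $m\times n$ SOS biquadratic forms $P$. *)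

From HB Require Import structures.
From mathcomp Require Import all_boot all_order all_algebra.
From mathcomp Require Import reals.
Set Implicit Arguments. Unset Strict Implicit. Unset Printing Implicit Defensive.
Import Order.TTheory GRing.Theory Num.Theory.
Local Open Scope ring_scope.

Section Biquad.
Variable R : realType.

Definition biquad (m n : nat) (a : 'I_m -> 'I_n -> 'I_m -> 'I_n -> R)
    (x : 'I_m -> R) (y : 'I_n -> R) : R :=
  \sum_(i < m) \sum_(j < n) \sum_(k < m) \sum_(l < n)
     a i j k l * x i * x k * y j * y l.

Definition is_biquad (m n : nat) (P : ('I_m -> R) -> ('I_n -> R) -> R) : Prop :=
  exists a : 'I_m -> 'I_n -> 'I_m -> 'I_n -> R,
    forall x y, P x y = biquad a x y.

Definition bilin (m n : nat) (c : 'I_m -> 'I_n -> R)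
    (x : 'I_m -> R) (y : 'I_n -> R) : R :=
  \sum_(i < m) \sum_(j < n) c i j * x i * y j.

Definition sos_with (m n : nat) (P : ('I_m -> R) -> ('I_n -> R) -> R) (r : nat)
    : Prop :=
  exists c : 'I_r -> 'I_m -> 'I_n -> R,
    forall x y, P x y = \sum_(p < r) (bilin (c p) x y) ^+ 2.

Definition is_sos (m n : nat) (P : ('I_m -> R) -> ('I_n -> R) -> R) : Prop :=
  exists r, sos_with P r.

Definition sos_rank_is (m n : nat) (P : ('I_m -> R) -> ('I_n -> R) -> R)
    (k : nat) : Prop :=
  sos_with P k /\ (forall r, sos_with P r -> (k <= r)%N).

Definition BSR_ge (m n k : nat) : Prop :=
  exists P : ('I_m -> R) -> ('I_n -> R) -> R,
    [/\ is_biquad P, is_sos P & forall r, sos_with P r -> (k <= r)%N].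

Definition P_cor (x y : 'I_4 -> R) : R :=
  let x1 := x (inord 0) in let x2 := x (inord 1) in
  let x3 := x (inord 2) in let x4 := x (inord 3) in
  let y1 := y (inord 0) in let y2 := y (inord 1) in
  let y3 := y (inord 2) in let y4 := y (inord 3) in
  x1^+2 * y1^+2 + x1^+2 * y2^+2 + x2^+2 * y1^+2 + x2^+2 * y3^+2
  + x3^+2 * y1^+2 + x3^+2 * y4^+2 + x4^+2 * y2^+2 + x4^+2 * y3^+2
  + x4^+2 * y4^+2 + (x1 * y3 + x2 * y4)^+2.

End Biquad.

(* The ten-square decomposition of P is visible.  For the lower bound, write a decomposition
   of P into r squares as P(x, y) = |sum_(i,j) x_i y_j v_ij|^2 with v_ij in R^r.  Polarizing at
   unit vectors shows that P determines the symmetrized Gram tensor <v_ij, v_kl> + <v_il, v_kj>.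
   The monomials absent from P force v_ij = 0, and |v_13| = |v_24| = 1 together with the cross
   term 2 x_1 x_2 y_3 y_4 force v_13 = v_24.  These two facts pin down the whole Gram tensor: it
   is that of the visible decomposition, so the ten vectors attached to its ten forms are
   orthonormal in R^r and r >= 10. *)

From HB Require Import structures.
From mathcomp Require Import all_boot all_order all_algebra.
From mathcomp Require Import reals.
From mathcomp Require Import ring lra.
Set Implicit Arguments. Unset Strict Implicit. Unset Printing Implicit Defensive.
Import Order.TTheory GRing.Theory Num.Theory.
Local Open Scope ring_scope.

Section GramTensor.
Variables (R : realType) (m n : nat).
Implicit Types (r : nat) (x : 'I_m -> R) (y : 'I_n -> R).

Definition gram r (c : 'I_r -> 'I_m -> 'I_n -> R) i j k l : R :=
  \sum_(p < r) c p i j * c p k l.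

Definition sos_form r (c : 'I_r -> 'I_m -> 'I_n -> R) x y : R :=
  \sum_(p < r) bilin (c p) x y ^+ 2.

Definition basis_vec d (i : 'I_d) : 'I_d -> R := fun t => (t == i)%:R.

Definition mixed_diff (Q : ('I_m -> R) -> ('I_n -> R) -> R) i k j l : R :=
  let e := @basis_vec m in let f := @basis_vec n in
  Q (e i \+ e k) (f j \+ f l) - Q (e i \+ e k) (f j) - Q (e i \+ e k) (f l)
  - Q (e i) (f j \+ f l) - Q (e k) (f j \+ f l)
  + Q (e i) (f j) + Q (e i) (f l) + Q (e k) (f j) + Q (e k) (f l).

Lemma gramC r (c : 'I_r -> 'I_m -> 'I_n -> R) i j k l : gram c i j k l = gram c k l i j.
Proof. by apply: eq_bigr => p _; rewrite mulrC. Qed.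

Lemma bilinDl (c : 'I_m -> 'I_n -> R) x x' y :
  bilin c (x \+ x') y = bilin c x y + bilin c x' y.
Proof.
rewrite /bilin -big_split; apply: eq_bigr => i _ /=.
by rewrite -big_split; apply: eq_bigr => j _ /=; ring.
Qed.

Lemma bilinDr (c : 'I_m -> 'I_n -> R) x y y' :
  bilin c x (y \+ y') = bilin c x y + bilin c x y'.
Proof.
rewrite /bilin -big_split; apply: eq_bigr => i _ /=.
by rewrite -big_split; apply: eq_bigr => j _ /=; ring.
Qed.

Lemma sum_basis_vec d (F : 'I_d -> R) j : \sum_(i < d) F i * basis_vec j i = F j.
Proof.
rewrite (bigD1 j) //= /basis_vec eqxx mulr1 big1 ?addr0 // => i /negbTE ->.
by rewrite mulr0.
Qed.

Lemma bilin_basis (c : 'I_m -> 'I_n -> R) i j :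
  bilin c (basis_vec i) (basis_vec j) = c i j.
Proof. by rewrite /bilin; under eq_bigr do rewrite sum_basis_vec; rewrite sum_basis_vec. Qed.

Lemma mixed_diff_sos_form r (c : 'I_r -> 'I_m -> 'I_n -> R) i k j l :
  mixed_diff (sos_form c) i k j l = 2 * (gram c i j k l + gram c i l k j).
Proof.
rewrite /mixed_diff /sos_form /gram -!sumrB -!big_split mulr_sumr /=.
apply: eq_bigr => p _; rewrite !bilinDl !bilinDr !bilin_basis; ring.
Qed.

Lemma eq_sos_form_gram_sym r s (c : 'I_r -> 'I_m -> 'I_n -> R) (d : 'I_s -> 'I_m -> 'I_n -> R) :
  sos_form c =2 sos_form d ->
  forall i j k l, gram c i j k l + gram c i l k j = gram d i j k l + gram d i l k j.
Proof.
move=> cd i j k l; apply: (@mulfI _ 2); first by rewrite pnatr_eq0.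
by rewrite /= -!mixed_diff_sos_form /mixed_diff !cd.
Qed.

Lemma sum_sqr_eq0 r (f : 'I_r -> R) : \sum_(p < r) f p ^+ 2 = 0 -> forall p, f p = 0.
Proof.
move=> /eqP; rewrite psumr_eq0 => [/allP f0 p|p _]; last exact: sqr_ge0.
by apply/eqP; rewrite -sqrf_eq0; apply: (implyP (f0 p (mem_index_enum p))).
Qed.

Lemma gram_diag_eq0 r (c : 'I_r -> 'I_m -> 'I_n -> R) i j :
  gram c i j i j = 0 -> forall p, c p i j = 0.
Proof.
by move=> c0; apply: sum_sqr_eq0; rewrite -[RHS]c0; apply: eq_bigr => p _; rewrite expr2.
Qed.

Lemma gram_dist_eq0 r (c : 'I_r -> 'I_m -> 'I_n -> R) i j k l :
  gram c i j i j - 2 * gram c i j k l + gram c k l k l = 0 -> forall p, c p i j = c p k l.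
Proof.
move=> c0 p; apply/eqP; rewrite -subr_eq0; apply/eqP; move: p; apply: sum_sqr_eq0.
rewrite -[RHS]c0 /gram mulr_sumr -sumrB -big_split /=.
by apply: eq_bigr => p _; ring.
Qed.

Lemma orthonormal_le_dim r s (c : 'I_r -> 'I_m -> 'I_n -> R) (idx : 'I_s -> 'I_m * 'I_n) :
  (forall a b, gram c (idx a).1 (idx a).2 (idx b).1 (idx b).2 = (a == b)%:R) -> (s <= r)%N.
Proof.
move=> on; pose M := \matrix_(a < s, p < r) c p (idx a).1 (idx a).2.
have MMt : M *m M^T = 1%:M.
  by apply/matrixP => a b; rewrite !mxE -on; apply: eq_bigr => p _; rewrite !mxE.
by rewrite -(mxrank1 R s) -MMt (leq_trans (mxrankM_maxl _ _)) ?rank_leq_col.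
Qed.

Lemma biquad_gram r (c : 'I_r -> 'I_m -> 'I_n -> R) x y :
  biquad (gram c) x y = sos_form c x y.
Proof.
rewrite /sos_form /biquad; symmetry.
under eq_bigr do rewrite expr2 /bilin mulr_suml.
rewrite exchange_big; apply: eq_bigr => i _.
under eq_bigr do rewrite mulr_suml.
rewrite exchange_big; apply: eq_bigr => j _.
under eq_bigr do rewrite mulr_sumr.
rewrite exchange_big; apply: eq_bigr => k _.
under eq_bigr do rewrite mulr_sumr.
rewrite exchange_big; apply: eq_bigr => l _.
by rewrite /gram !mulr_suml; apply: eq_bigr => p _; ring.
Qed.

End GramTensor.

Section P_cor.
Variable R : realType.

(* Indices are 0-based: (i, j) stands for x_(i+1) y_(j+1), and its value is the number of
   the square containing it; the first nine are monomials, the tenth is x_1 y_3 + x_2 y_4.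
   [None] marks the monomials that do not occur in P at all. *)
Definition P_cor_index (i j : nat) : option nat :=
  match i, j with
  | 0, 0 => Some 0 | 0, 1 => Some 1 | 1, 0 => Some 2 | 1, 2 => Some 3
  | 2, 0 => Some 4 | 2, 3 => Some 5 | 3, 1 => Some 6 | 3, 2 => Some 7
  | 3, 3 => Some 8 | 0, 2 | 1, 3 => Some 9 | _, _ => None
  end%N.

Definition P_cor_sos (a : 'I_10) (i j : 'I_4) : R := (P_cor_index i j == Some (a : nat))%:R.

Definition P_cor_rep (a : 'I_10) : 'I_4 * 'I_4 :=
  (inord (nth 0 [:: 0; 0; 1; 1; 2; 2; 3; 3; 3; 0] a),
   inord (nth 0 [:: 0; 1; 0; 2; 0; 3; 1; 2; 3; 2] a))%N.

Lemma sum_ord_inord d (F : 'I_d.+1 -> R) :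
  \sum_(i < d.+1) F i = \sum_(0 <= k < d.+1) F (inord k).
Proof. by rewrite big_mkord; apply: eq_bigr => i _; rewrite inord_val. Qed.

Lemma P_cor_sosE x y : P_cor x y = sos_form P_cor_sos x y.
Proof.
rewrite /sos_form /bilin.
do 3 rewrite !sum_ord_inord /index_iota /= !big_cons !big_nil.
by rewrite /P_cor_sos !inordK //= /P_cor; ring.
Qed.

Lemma P_cor_sos_off a (i j : 'I_4) : P_cor_index i j = None -> P_cor_sos a i j = 0.
Proof. by rewrite /P_cor_sos => ->. Qed.

Lemma P_cor_sos_merge a :
  P_cor_sos a (inord 1) (inord 3) = P_cor_sos a (inord 0) (inord 2).
Proof. by rewrite /P_cor_sos !inordK. Qed.

Lemma P_cor_index_rep a : P_cor_index (P_cor_rep a).1 (P_cor_rep a).2 = Some (a : nat).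
Proof. by case: a => [[|[|[|[|[|[|[|[|[|[|?]]]]]]]]]] ?] //; rewrite /= !inordK. Qed.

Lemma gram_P_cor_sos_rep a b :
  gram P_cor_sos (P_cor_rep a).1 (P_cor_rep a).2 (P_cor_rep b).1 (P_cor_rep b).2
  = (a == b)%:R.
Proof.
rewrite /gram /P_cor_sos !P_cor_index_rep.
under eq_bigr do rewrite !(inj_eq (@Some_inj _)) !val_eqE.
rewrite (bigD1 a) //= eqxx mul1r [b == a]eq_sym big1 ?addr0 // => q /negbTE.
by rewrite eq_sym => ->; rewrite mul0r.
Qed.

End P_cor.

Arguments P_cor_sos {R} a i j.

(* [E] is meant to be the difference of the Gram tensors of two decompositions of P. *)
Section Gram_defect.
Variables (R : realType) (E : 'I_4 -> 'I_4 -> 'I_4 -> 'I_4 -> R).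
Hypothesis E_swap : forall i j k l, E i j k l + E i l k j = 0.
Hypothesis E_sym : forall i j k l, E i j k l = E k l i j.
Hypothesis E_off : forall i j k l : 'I_4, P_cor_index i j = None -> E i j k l = 0.
Hypothesis E_merge : forall k l, E (inord 1) (inord 3) k l = E (inord 0) (inord 2) k l.

Let degenerate (i j k l : nat) :=
  [|| i == k, j == l | None \in [:: P_cor_index i j; P_cor_index k l; P_cor_index i l;
                                      P_cor_index k j]].
Let merged (i j : nat) := (i, j) \in [:: (0, 2); (1, 3)]%N.

Let E_skew i j k l : E i j k l = - E i l k j.
Proof. by apply/eqP; rewrite -addr_eq0 E_swap. Qed.

Let E_degenerate (i j k l : 'I_4) : degenerate i j k l -> E i j k l = 0.
Proof.
case/or3P=> [/eqP/val_inj<-|/eqP/val_inj<-|].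
- by have := E_skew i j i l; rewrite E_sym; lra.
- by have := E_skew i j k j; lra.
rewrite !inE => /or4P[] /eqP/esym off.
- by rewrite E_off.
- by rewrite E_sym E_off.
- by rewrite E_skew E_off ?oppr0.
- by rewrite E_skew E_sym E_off ?oppr0.
Qed.

Let E_merged (i j k l : 'I_4) : merged i j -> E i j k l = 0.
Proof.
have E02 k' l' : E (inord 0) (inord 2) k' l' = 0.
  have : degenerate 0 2 k' l' || degenerate 1 3 k' l'.
    by move: k' l'; do 2 case=> [[|[|[|[|?]]]] ?] //.
  case/orP; [move: (@E_degenerate (inord 0) (inord 2) k' l') |
             move: (@E_degenerate (inord 1) (inord 3) k' l'); rewrite E_merge];
  by rewrite !inordK //; apply.
rewrite /merged !inE => /orP[] /eqP[vi vj].
  by rewrite -[i]inord_val -[j]inord_val vi vj.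
by rewrite -[i]inord_val -[j]inord_val vi vj E_merge.
Qed.

Lemma P_cor_gram_defect_eq0 (i j k l : 'I_4) : E i j k l = 0.
Proof.
have : degenerate i j k l || [|| merged i j, merged k l, merged i l | merged k j].
  by move: i j k l; do 4 case=> [[|[|[|[|?]]]] ?] //.
case/orP=> [/E_degenerate //|/or4P[]/E_merged //].
- by rewrite E_sym.
- by rewrite E_skew => ->; rewrite oppr0.
- by rewrite E_skew E_sym => ->; rewrite oppr0.
Qed.
End Gram_defect.

Section P_cor_lower_bound.
Variables (R : realType) (r : nat) (c : 'I_r -> 'I_4 -> 'I_4 -> R).
Hypothesis c_sos : forall x y, P_cor x y = sos_form c x y.

Let E i j k l := gram c i j k l - gram P_cor_sos i j k l.

Let gram_swap i j k l :
  gram c i j k l + gram c i l k j = gram P_cor_sos i j k l + gram P_cor_sos i l k j.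
Proof. by apply: eq_sos_form_gram_sym => x y; rewrite -c_sos P_cor_sosE. Qed.

Let E_swap i j k l : E i j k l + E i l k j = 0.
Proof. by rewrite /E; have := gram_swap i j k l; lra. Qed.

Let E_sym i j k l : E i j k l = E k l i j.
Proof. by rewrite /E gramC [gram P_cor_sos _ _ _ _]gramC. Qed.

Let E_off (i j k l : 'I_4) : P_cor_index i j = None -> E i j k l = 0.
Proof.
move=> ij_off; have sos_off k' l' : gram P_cor_sos i j k' l' = 0.
  by rewrite /gram big1 // => a _; rewrite P_cor_sos_off ?mul0r.
have c_off p : c p i j = 0.
  by apply: gram_diag_eq0; have := gram_swap i j i j; rewrite !sos_off; lra.
by rewrite /E sos_off /gram big1 ?subr0 // => p _; rewrite c_off mul0r.
Qed.

Let E_diag i j : E i j i j = 0.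
Proof. by have := E_swap i j i j; lra. Qed.

Let sos_merge_l k l :
  gram (@P_cor_sos R) (inord 1) (inord 3) k l = gram P_cor_sos (inord 0) (inord 2) k l.
Proof. by apply: eq_bigr => a _; rewrite P_cor_sos_merge. Qed.

Let sos_merge_r k l :
  gram (@P_cor_sos R) k l (inord 1) (inord 3) = gram P_cor_sos k l (inord 0) (inord 2).
Proof. by rewrite gramC sos_merge_l gramC. Qed.

Let c_merge p : c p (inord 1) (inord 3) = c p (inord 0) (inord 2).
Proof.
move: p; apply: gram_dist_eq0.
have E_cross : E (inord 1) (inord 3) (inord 0) (inord 2) = 0.
  have := E_swap (inord 1) (inord 3) (inord 0) (inord 2).
  by rewrite [E _ (inord 2) _ _]E_sym [E (inord 0) _ _ _]E_off; [lra | rewrite !inordK].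
move: E_cross (E_diag (inord 1) (inord 3)) (E_diag (inord 0) (inord 2)).
by rewrite /E !sos_merge_l !sos_merge_r; lra.
Qed.

Let E_merge k l : E (inord 1) (inord 3) k l = E (inord 0) (inord 2) k l.
Proof.
by rewrite /E sos_merge_l; congr (_ - _); apply: eq_bigr => p _; rewrite c_merge.
Qed.

Lemma P_cor_gram_unique i j k l : gram c i j k l = gram P_cor_sos i j k l.
Proof.
by apply/eqP; rewrite -subr_eq0; apply/eqP; apply: (P_cor_gram_defect_eq0 E_swap).
Qed.

Lemma P_cor_sos_length_ge : (10 <= r)%N.
Proof.
apply: (orthonormal_le_dim (c := c) (idx := P_cor_rep)) => a b.
by rewrite P_cor_gram_unique gram_P_cor_sos_rep.
Qed.

End P_cor_lower_bound.

Theorem corollary3p2 (R : realType) :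
  BSR_ge R 4 4 10 /\ is_biquad (@P_cor R) /\ sos_rank_is (@P_cor R) 10.
Proof.
have sos10 : sos_with (@P_cor R) 10 by exists P_cor_sos; exact: P_cor_sosE.
have sos_min r : sos_with (@P_cor R) r -> (10 <= r)%N.
  by case=> c; apply: P_cor_sos_length_ge.
have biquad_P : is_biquad (@P_cor R).
  by exists (gram P_cor_sos) => x y; rewrite biquad_gram P_cor_sosE.
split; last by [].
by exists (@P_cor R); split => //; exists 10%N.
Qed.
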